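(* Let $a,b,c,d\ge1$ be integers and let $$M=\begin{bmatrix}a&-1&-1&-1\\-1&b&-1&-1\\-1&-1&c&-1\\-1&-1&-1&d\end{bmatrix}.$$ If $\det M=0$ and two of $a,b,c,d$ equal $7$, then the other two are $1$ and $3$ (in some order). *)

From mathcomp Require Import all_boot all_order all_algebra.
Set Implicit Arguments. Unset Strict Implicit. Unset Printing Implicit Defensive.
Import GRing.Theory Num.Theory.
Local Open Scope ring_scope.

Definition Mmat (v : 'I_4 -> int) : 'M[int]_4 :=
  \matrix_(i < 4, j < 4) (if i == j then v i else -1).

From mathcomp Require Import all_boot all_order all_algebra.
From mathcomp Require Import ring zify.

(* With x_i the diagonal entries shifted by one, M = diag x - J for the
   all-ones matrix J, and det (diag x - J) = prod_i x_i - sum_i prod_(j <> i) x_j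
   (expand along the first row and induct).  If two of the x_i are 8 and the
   others are p, q >= 2, the determinant vanishes iff 3 p q = 4 (p + q), whose
   only solutions are {p, q} = {2, 4}. *)

Set Implicit Arguments.
Unset Strict Implicit.
Unset Printing Implicit Defensive.

Import GRing.Theory Num.Theory.
Local Open Scope ring_scope.

Section DiagSubOnes.
Variable R : comPzRingType.

Definition diag_sub_ones n (x : 'I_n -> R) : 'M[R]_n :=
  diag_mx (\row_i x i) - const_mx 1.

Lemma det_block_ones_diag_sub_ones n (y : 'I_n -> R) :
  \det (block_mx (-1%:M : 'M_1) (- const_mx 1) (- const_mx 1) (diag_sub_ones y))
  = - \prod_i y i.
Proof.
have ones_mul : (const_mx 1 : 'M[R]_(n, 1)) *m (const_mx 1 : 'M_(1, n)) = const_mx 1.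
  by apply/matrixP => i j; rewrite !mxE big_ord1 !mxE mulr1.
have -> : block_mx (-1%:M) (- const_mx 1) (- const_mx 1) (diag_sub_ones y) =
          block_mx (1%:M : 'M_1) 0 (const_mx 1) (1%:M : 'M_n) *m
          block_mx (-1%:M : 'M_1) (- const_mx 1) 0 (diag_mx (\row_i y i)).
  by rewrite mulmx_block !mul1mx !mul0mx !addr0 !mulmxN mulmx1 ones_mul addrC.
rewrite det_mulmx det_lblock det_ublock !det1 det_diag det_mx11 !mxE.
by rewrite !mul1r eqxx mulr1n mulN1r; under eq_bigr do rewrite mxE.
Qed.

Lemma det_diag_sub_ones_recl n (x : 'I_n.+1 -> R) :
  \det (diag_sub_ones x) =
  x ord0 * \det (diag_sub_ones (x \o lift ord0)) - \prod_i x (lift ord0 i).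
Proof.
set A := diag_sub_ones x.
pose B := \matrix_(i, j) if i == ord0 then (j == ord0)%:R else A i j.
pose C := \matrix_(i, j) if i == ord0 then -1 else A i j.
have lift0_neq0 i : (lift ord0 i == ord0 :> 'I_n.+1) = false.
  by rewrite eq_sym (negPf (neq_lift _ _)).
have -> : \det A = x ord0 * \det B + 1 * \det C.
  apply: (determinant_multilinear (i0 := ord0)).
  - apply/rowP => j; rewrite !mxE eqxx mul1r.
    case: eqP => [<-|/eqP/negPf nj]; first by rewrite eqxx mulr1 mulr1n.
    by rewrite eq_sym nj mulr0 mulr0n.
  - by apply/matrixP => i j; rewrite !mxE lift0_neq0.
  - by apply/matrixP => i j; rewrite !mxE lift0_neq0.
have -> : \det B = \det (diag_sub_ones (x \o lift ord0)).
  rewrite (expand_det_row _ ord0) big_ord_recl big1 => [|j _]; last first.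
    by rewrite !mxE eqxx lift0_neq0 mul0r.
  rewrite addr0 !mxE eqxx mul1r /cofactor expr0 mul1r; congr (\det _).
  by apply/matrixP => i j; rewrite !mxE lift0_neq0 (inj_eq lift_inj).
have -> : C = block_mx (-1%:M) (- const_mx 1) (- const_mx 1)
                (diag_sub_ones (x \o lift ord0)) :> 'M_(1 + n).
  rewrite -[LHS](@submxK _ 1 n 1 n); congr block_mx; apply/matrixP => i j;
    by rewrite !mxE ?ord1 ?rshift1 ?lift0_neq0 ?(inj_eq lift_inj) //= mulr0n sub0r.
by rewrite det_block_ones_diag_sub_ones mul1r.
Qed.

Lemma det_diag_sub_ones n (x : 'I_n -> R) :
  \det (diag_sub_ones x) = \prod_i x i - \sum_i \prod_(j | j != i) x j.
Proof.
elim: n x => [|n IHn] x; first by rewrite det_mx00 !big_ord0 subr0.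
have lift0_neq0 i : (lift ord0 i != ord0 :> 'I_n.+1) by rewrite eq_sym neq_lift.
have prod_skip0 : \prod_(j | j != ord0) x j = \prod_i x (lift ord0 i).
  by rewrite big_mkcond big_ord_recl eqxx /= mul1r.
have prod_skip_lift (i : 'I_n) : \prod_(j | j != lift ord0 i) x j =
                                 x ord0 * \prod_(j | j != i) x (lift ord0 j).
  rewrite big_mkcond big_ord_recl eq_sym lift0_neq0 [in RHS]big_mkcond.
  by congr (_ * _); apply: eq_bigr => j _; rewrite (inj_eq lift_inj).
rewrite det_diag_sub_ones_recl IHn big_ord_recl [in RHS]big_ord_recl prod_skip0.
rewrite (eq_bigr _ (fun i _ => prod_skip_lift i)) -big_distrr /=.
ring.
Qed.

End DiagSubOnes.

Lemma Mmat_diag_sub_ones (v : 'I_4 -> int) :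
  Mmat v = diag_sub_ones (fun i => v i + 1).
Proof.
apply/matrixP => i j; rewrite !mxE.
by case: (i == j); rewrite ?mulr1n ?addrK ?mulr0n ?sub0r.
Qed.

Section BigUniqCard.
Variables (R : Type) (idx : R) (op : Monoid.com_law idx).

Lemma big_uniq_cardT (T : finType) (s : seq T) (P : pred T) (F : T -> R) :
  uniq s -> size s = #|T| ->
  \big[op/idx]_(i | P i) F i = \big[op/idx]_(i <- s | P i) F i.
Proof.
move=> s_uniq s_size.
have s_full : s =i T.
  by apply/subset_cardP; [rewrite (card_uniqP s_uniq) | apply/subsetP].
rewrite big_mkcond [RHS]big_mkcond [RHS]big_uniq //.
by apply: eq_bigl => i; rewrite s_full.
Qed.

End BigUniqCard.

Lemma three_mul_eq_four_add (a b : int) : 1 <= a -> 1 <= b ->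
  3 * ((a + 1) * (b + 1)) = 4 * ((a + 1) + (b + 1)) ->
  (a = 1 /\ b = 3) \/ (a = 3 /\ b = 1).
Proof.
move=> a_ge1 b_ge1 eq_ab.
have [a1|b1] : a = 1 \/ b = 1 by nia.
- by left; split; lia.
- by right; split; lia.
Qed.

Theorem lemma3p8 (v : 'I_4 -> int) :
  (forall i, 1 <= v i) ->
  \det (Mmat v) = 0 ->
  forall i j : 'I_4, i != j -> v i = 7 -> v j = 7 ->
  forall k l : 'I_4, k != i -> k != j -> l != i -> l != j -> k != l ->
  (v k = 1 /\ v l = 3) \/ (v k = 3 /\ v l = 1).
Proof.
move=> v_ge1 det0 i j hij vi vj k l hki hkj hli hlj hkl.
have ijkl_uniq : uniq [:: i; j; k; l].
  by rewrite /= !inE !negb_or hij hkl !(eq_sym i) !(eq_sym j) hki hli hkj hlj.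
have expand4 := big_uniq_cardT _ _ _ ijkl_uniq (esym (card_ord 4)).
move: det0; rewrite Mmat_diag_sub_ones det_diag_sub_ones !expand4 !big_cons big_nil.
rewrite !expand4 !big_cons !big_nil /= !eqxx /=.
rewrite !(eq_sym j i, eq_sym i k, eq_sym j k, eq_sym i l, eq_sym j l, eq_sym l k).
rewrite !(negbTE hij, negbTE hki, negbTE hkj, negbTE hli, negbTE hlj, negbTE hkl).
rewrite /= vi vj => det0.
by apply: three_mul_eq_four_add; [exact: v_ge1 | exact: v_ge1 | lia].
Qed.
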